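(* Let $\Theta=(\theta_k)_{k\ge1}$ be a sequence of positive real numbers such that the series $g(z)=\sum_{k\ge1}\frac{\theta_k}{k}z^k$ has radius of convergence $r\in(0,\infty)$, i.e. $\frac1r=\limsup_k\theta_k^{1/k}$. Let $(Y_\ell)_{\ell\ge1}$ be independent Poisson random variables, $Y_\ell$ with parameter $\frac{r^\ell\theta_\ell}{\ell}$, let $X_k=\sum_{\ell\mid k}\ell Y_\ell$ and $f(z)=\sum_{k\ge1}\frac{X_k}{k}z^k$. Then almost surely the radius of convergence of the power series $f$ is greater than or equal to $1$. *)

From HB Require Import structures.
From mathcomp Require Import all_boot all_order all_algebra.
From mathcomp Require Import all_classical all_reals all_analysis.
Set Implicit Arguments. Unset Strict Implicit. Unset Printing Implicit Defensive.
Import Order.TTheory GRing.Theory Num.Theory.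
Import numFieldNormedType.Exports.
Local Open Scope classical_set_scope.
Local Open Scope ring_scope.

Definition radius_of_convergence {R : realType} (a : nat -> R) : \bar R :=
  ereal_sup [set x%:E | x in
    [set rho : R | 0 <= rho /\ cvgn (series (fun k => `|a k| * rho ^+ k))]].

Definition mutually_independent {d : measure_display} {T : measurableType d}
  {R : realType} (P : probability T R) {I : eqType} (Y : I -> T -> R) : Prop :=
  forall (J : seq I) (B : I -> set R), uniq J ->
    (forall i, measurable (B i)) ->
    P (\bigcap_(i in [set i | i \in J]) (Y i @^-1` B i)) =
    (\prod_(i <- J) P (Y i @^-1` B i))%E.

From HB Require Import structures.
From mathcomp Require Import all_boot all_order all_algebra.
From mathcomp Require Import all_classical all_reals all_analysis.
From mathcomp Require Import ring lra.
Set Implicit Arguments.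
Unset Strict Implicit.
Unset Printing Implicit Defensive.
Import Order.TTheory GRing.Theory Num.Theory.
Import numFieldNormedType.Exports.
Local Open Scope classical_set_scope.
Local Open Scope ring_scope.

(* Write lam_l = r^l theta_l / l for the Poisson parameters.  Since the
   radius of g is r, lam_l = O(s^l) for every s > 1.  A Poisson variable of
   parameter lam exceeds m - 1 with probability at most lam / m; taking
   m - 1 ~ lam_l l (l + 1) gives summable probabilities 1 / (l (l + 1)), so by
   the first Borel-Cantelli lemma, almost surely Y_l <= lam_l l (l + 1) for
   all large l.  Hence l Y_l, and with it X_k / k <= sum_(l <= k) l Y_l, is
   O(s^k) for every s > 1, which forces the radius of f to be at least 1. *)

Section subexponential.
Variable R : realType.
Implicit Types (a b : nat -> R) (s : R).

(* The exponential growth rate limsup |a k|^(1/k) is at most 1. *)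
Definition subexponential a :=
  forall s, 1 < s -> exists D, forall k, `|a k| <= D * s ^+ k.

Lemma geometric_bound_ge0 a D s : (forall k, `|a k| <= D * s ^+ k) -> 0 <= D.
Proof. by move=> aD; have := aD 0%N; rewrite expr0 mulr1; exact: le_trans. Qed.

Lemma subexponential_eventually_le a b N :
  (forall k, (N <= k)%N -> `|a k| <= `|b k|) ->
  subexponential b -> subexponential a.
Proof.
move=> le_ab b_subexp s s1; have [D bD] := b_subexp s s1.
have D0 := geometric_bound_ge0 bD.
have sk_ge1 k : 1 <= s ^+ k by rewrite exprn_ege1 // ltW.
have sk_ge0 k : 0 <= s ^+ k := le_trans ler01 (sk_ge1 k).
exists (D + \sum_(i < N) `|a i|) => k; rewrite mulrDl.
have [kN | Nk] := ltnP k N.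
  have ak_le : `|a k| <= \sum_(i < N) `|a i|.
    by rewrite (bigD1 (Ordinal kN)) //= lerDl sumr_ge0.
  apply: le_trans ak_le _; rewrite ler_wpDl ?mulr_ge0 //.
  by apply: ler_peMr => //; rewrite sumr_ge0.
rewrite (le_trans (le_ab _ Nk)) // (le_trans (bD k)) //.
by rewrite lerDl mulr_ge0 ?sumr_ge0.
Qed.

Lemma subexponentialM a b : subexponential a -> subexponential b ->
  subexponential (fun k => a k * b k).
Proof.
move=> a_subexp b_subexp s s1.
have s0 : 0 < s := lt_trans ltr01 s1.
have t1 : 1 < Num.sqrt s by rewrite -sqrtr1 ltr_sqrt.
have [Da aD] := a_subexp _ t1; have [Db bD] := b_subexp _ t1.
exists (Da * Db) => k; rewrite normrM (le_trans (ler_pM _ _ (aD k) (bD k))) //.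
by rewrite mulrACA -exprMn -expr2 sqr_sqrtr // ltW.
Qed.

Lemma subexponential_cst c : subexponential (fun=> c).
Proof.
move=> s s1; exists `|c| => k.
by apply: ler_peMr => //; rewrite exprn_ege1 // ltW.
Qed.

Lemma subexponential_partial_sum a : subexponential a ->
  subexponential (fun n => \sum_(k < n.+1) `|a k|).
Proof.
move=> a_subexp s s1; have [D aD] := a_subexp s s1.
have D0 := geometric_bound_ge0 aD.
have s1_gt0 : 0 < s - 1 by rewrite subr_gt0.
exists (D * s / (s - 1)) => n; rewrite ger0_norm ?sumr_ge0 //.
apply: le_trans (ler_sum _ (fun (k : 'I_n.+1) _ => aD k)) _; rewrite -mulr_sumr.
have geom : \sum_(k < n.+1) s ^+ k = (s ^+ n.+1 - 1) / (s - 1).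
  by rewrite subrX1 mulrC mulKf // gt_eqF.
have geom_le : (s ^+ n.+1 - 1) / (s - 1) <= s / (s - 1) * s ^+ n.
  by rewrite mulrAC -exprS; apply: ler_wpM2r; rewrite ?invr_ge0 ?gerBl ?ltW.
by rewrite geom (le_trans (ler_wpM2l D0 geom_le)) // !mulrA.
Qed.

Lemma subexponential_natrS : subexponential (fun n => n.+1%:R).
Proof.
apply: (subexponential_eventually_le (N := 0) _
  (subexponential_partial_sum (subexponential_cst 1))) => n _.
by rewrite normr1 sumr_const card_ord.
Qed.

Lemma subexponential_natr : subexponential (fun n => n%:R).
Proof.
apply: (subexponential_eventually_le (N := 0) _ subexponential_natrS) => n _.
by rewrite !normr_nat ler_nat.
Qed.

Lemma subexponential_radius a r : 0 < r ->
  (r%:E <= radius_of_convergence a)%E -> subexponential (fun k => a k * r ^+ k).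
Proof.
move=> r0 r_le s s1; have s0 : 0 < s := lt_trans ltr01 s1.
have : ((r / s)%:E < radius_of_convergence a)%E.
  by rewrite (lt_le_trans _ r_le) // lte_fin ltr_pdivrMr // ltr_pMr.
move=> /ereal_sup_gt[_ [rho [rho0 cvg_rho] <-]]; rewrite lte_fin => rs_lt.
have [M aM] := bounded_fun_has_ubound (cvg_series_bounded cvg_rho).
exists M => k; have := aM _ (ex_intro2 _ _ k I erefl).
rewrite normrM (ger0_norm (exprn_ge0 _ (ltW r0))).
rewrite -(divfK (lt0r_neq0 s0) r) exprMn mulrA.
move=> ak_le; apply: ler_wpM2r; first by rewrite exprn_ge0 // ltW.
apply: le_trans ak_le; apply: ler_wpM2l => //.
by apply: lerXn2r; rewrite ?nnegrE ?(ltW rs_lt) // divr_ge0 // ltW.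
Qed.

Lemma radius_of_convergence_ge1 a : subexponential a ->
  (1 <= radius_of_convergence a)%E.
Proof.
move=> a_subexp; apply/lee_mul01Pr => // rho /andP[rho0 rho1]; rewrite mule1.
apply: ereal_sup_ubound; exists rho => //; split; first exact: ltW.
have s1 : 1 < 2 / (1 + rho) by rewrite ltr_pdivlMr; lra.
have [D aD] := a_subexp _ s1.
have D0 := geometric_bound_ge0 aD.
have q_ge0 : 0 <= 2 / (1 + rho) * rho by rewrite mulr_ge0 ?divr_ge0 //; lra.
have q_lt1 : `|2 / (1 + rho) * rho| < 1.
  by rewrite ger0_norm // mulrAC ltr_pdivrMr; lra.
apply: (@series_le_cvg _ _ (geometric D (2 / (1 + rho) * rho))) => [k|k|k|].
- by rewrite mulr_ge0 // exprn_ge0 // ltW.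
- by rewrite /geometric /= mulr_ge0 // exprn_ge0.
- rewrite /geometric /= exprMn mulrA; apply: ler_wpM2r => //.
  by rewrite exprn_ge0 // ltW.
- exact: is_cvg_geometric_series.
Qed.

Lemma subexponential_divisor_sum (y : nat -> R) :
  subexponential (fun l => l%:R * y l) ->
  subexponential (fun k => if k == 0%N then 0
    else (\sum_(l < k.+1 | (0 < l)%N && (l %| k)%N) l%:R * y l) / k%:R).
Proof.
move=> ly_subexp.
apply: (subexponential_eventually_le (N := 0) _
  (subexponential_partial_sum ly_subexp)) => -[|k] _ /=.
  by rewrite normr0.
rewrite normrM normfV normr_nat ler_pdivrMr ?ltr0n //.
rewrite (le_trans (ler_norm_sum _ _ _)) // ger0_norm ?sumr_ge0 //.
apply: le_trans (ler_peMr _ _); rewrite ?sumr_ge0 ?ler1n //.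
by rewrite [leLHS]big_mkcond; apply: ler_sum => l _; case: ifP.
Qed.

End subexponential.

Section poisson_tail.
Variable R : realType.

Lemma exp_coeffS (x : R) n : exp_coeff x n.+1 = x / n.+1%:R * exp_coeff x n.
Proof.
rewrite /exp_coeff /= factS natrM exprS.
have n1_neq0 : (n.+1%:R : R) != 0 by rewrite pnatr_eq0.
have fact_neq0 : (n`!%:R : R) != 0 by rewrite pnatr_eq0 -lt0n fact_gt0.
by field; rewrite fact_neq0 -(natrD _ 1 n) pnatr_eq0.
Qed.

Lemma nondecreasing_series_exp_coeff (x : R) : 0 <= x ->
  nondecreasing_seq (series (exp_coeff x)).
Proof.
move=> x0; apply/nondecreasing_seqP => n.
by rewrite seriesSr lerDl exp_coeff_ge0.
Qed.

Lemma series_exp_coeff_le_expR (x : R) n : 0 <= x ->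
  series (exp_coeff x) n <= expR x.
Proof.
move=> x0; apply: nondecreasing_cvgn_le; last exact: is_cvg_series_exp_coeff.
exact: nondecreasing_series_exp_coeff.
Qed.

Lemma expR_le_series_exp_coeff_tail (lam : R) m : 0 < lam -> (0 < m)%N ->
  expR lam <= series (exp_coeff lam) m + lam / m%:R * expR lam.
Proof.
move=> lam0 m0; set S := series (exp_coeff lam); set c := lam / m%:R.
have c0 : 0 <= c by rewrite divr_ge0 // ltW.
have S_nd : {homo S : i j / (i <= j)%N >-> i <= j}.
  exact: nondecreasing_series_exp_coeff (ltW lam0).
have S_ge0 n : 0 <= S n.
  by rewrite /S /series /= sumr_ge0 // => i _; exact: exp_coeff_ge0 (ltW lam0).
have below_m i y : (i <= m)%N -> 0 <= y -> S i <= S m + c * y.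
  by move=> im y0; apply: ler_wpDr; [rewrite mulr_ge0 | exact: S_nd].
(* past index m, each coefficient is at most c times the previous one *)
have S_rec n : S n.+1 <= S m + c * S n.
  elim: n => [|n IHn]; first exact: below_m.
  have [n2_le_m | m_lt_n2] := leqP n.+2 m; first exact: below_m.
  have coef_le : exp_coeff lam n.+1 <= c * exp_coeff lam n.
    rewrite exp_coeffS; apply: ler_wpM2r.
      exact: exp_coeff_ge0 (ltW lam0).
    apply: ler_wpM2l; first exact: ltW.
    by rewrite lef_pV2 ?posrE ?ltr0n // ler_nat.
  have S_succ k : S k.+1 = S k + exp_coeff lam k := seriesSr _ k.
  rewrite S_succ (le_trans (lerD IHn coef_le)) //.
  by rewrite S_succ mulrDr addrA.
rewrite [X in X <= _]/expR -/S.
apply: limr_le; first exact: is_cvg_series_exp_coeff.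
apply: nearW => -[|n]; first exact: below_m (expR_ge0 _).
rewrite (le_trans (S_rec n)) // lerD2l; apply: ler_wpM2l => //.
exact: series_exp_coeff_le_expR (ltW lam0).
Qed.

Lemma poisson_tail d (T : measurableType d) (P : probability T R) (Z : T -> R)
    (lam : R) (m : nat) :
  measurable_fun setT Z -> 0 < lam -> (0 < m)%N ->
  (forall n, P (Z @^-1` [set n%:R]) = (poisson_pmf lam n)%:E) ->
  (P (~` \big[setU/set0]_(n < m) (Z @^-1` [set n%:R])) <= (lam / m%:R)%:E)%E.
Proof.
move=> mZ lam0 m0 Zpoisson.
have mZn (n : nat) : measurable (Z @^-1` [set n%:R]).
  by rewrite -[X in measurable X]setTI; apply: mZ => //; exact: measurable_set1.
rewrite probability_setC; last by apply: bigsetU_measurable => n _; exact: mZn.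
rewrite measure_bigsetU_ord //; last first.
  apply/trivIsetP => i j _ _ ij; apply/seteqP; split => // t /= [-> /eqP].
  by rewrite eqr_nat => /eqP/val_inj ij'; rewrite ij' eqxx in ij.
rewrite (eq_bigr (fun i : 'I_m => (poisson_pmf lam i)%:E)) => [|i _];
  last exact: Zpoisson.
rewrite sumEFin -EFinB lee_fin.
have -> : \sum_(i < m) poisson_pmf lam i =
          series (exp_coeff lam) m * expR (- lam).
  rewrite seriesEord /= big_distrl /=; apply: eq_bigr => i _.
  by rewrite /poisson_pmf lam0 /exp_coeff.
have := expR_le_series_exp_coeff_tail lam0 m0; have := expR_gt0 lam.
rewrite expRN; set S := series _ m; move=> E0 tail.
rewrite -[X in X - _](mulfV (lt0r_neq0 E0)) -mulrBl ler_pdivrMr //; lra.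
Qed.

End poisson_tail.

Lemma ae_eventually_not d (T : measurableType d) (R : realType)
    (mu : {measure set T -> \bar R}) (F : (set T)^nat) :
  (forall j, measurable (F j)) -> (\sum_(j <oo) mu (F j) < +oo)%E ->
  {ae mu, forall t, exists N, forall j, (N <= j)%N -> ~ F j t}.
Proof.
move=> mF summable; exists (lim_sup_set F); split.
- by apply: bigcap_measurable => // n _; apply: bigcup_measurable => j _.
- exact: lim_sup_set_cvg0.
- move=> t /= not_eventually n _; apply: contrapT => none_after_n.
  by apply: not_eventually; exists n => j nj Fjt; apply: none_after_n; exists j.
Qed.

Lemma nneseries_inv_mulSS_lty (R : realType) :
  (\sum_(j <oo) ((j.+1%:R * j.+2%:R)^-1 : R)%:E < +oo)%E.
Proof.
apply: (@le_lt_trans _ _ 1%:E); last exact: ltry.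
apply: lime_le.
  by apply: is_cvg_nneseries => j _ _; rewrite lee_fin invr_ge0.
apply: nearW => N; rewrite sumEFin lee_fin.
have telescope j : ((j.+1%:R * j.+2%:R)^-1 : R) =
    - (j.+2%:R^-1) - - (j.+1%:R^-1).
  by field; rewrite -(natrD _ 1 j) -(natrD _ 2 j) !pnatr_eq0.
under eq_bigr do rewrite telescope.
rewrite (telescope_sumr (fun k => - (k.+1%:R^-1 : R))) //= invr1 opprK.
by rewrite gerDr oppr_le0 invr_ge0.
Qed.

Lemma ae_poisson_eventually_le d (T : measurableType d) (R : realType)
    (P : probability T R) (Z : nat -> T -> R) (lam : nat -> R) :
  (forall l, measurable_fun setT (Z l)) -> (forall l, (0 < l)%N -> 0 < lam l) ->
  (forall l n, (0 < l)%N ->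
     P (Z l @^-1` [set n%:R]) = (poisson_pmf (lam l) n)%:E) ->
  {ae P, forall t, exists N, forall l, (N <= l)%N ->
     `|Z l t| <= lam l * (l%:R * l.+1%:R)}.
Proof.
move=> mZ lam_gt0 Zpoisson.
pose x l := lam l * (l%:R * l.+1%:R).
have x_ge0 j : 0 <= x j.+1 by rewrite mulr_ge0 // ltW // lam_gt0.
pose bad j := ~` \big[setU/set0]_(n < (Num.truncn (x j.+1)).+1)
                   (Z j.+1 @^-1` [set n%:R]).
have bad_meas j : measurable (bad j).
  apply: measurableC; apply: bigsetU_measurable => n _.
  by rewrite -[X in measurable X]setTI; apply: mZ => //; exact: measurable_set1.
have bad_le j : (P (bad j) <= ((j.+1%:R * j.+2%:R)^-1)%:E)%E.
  apply: le_trans (poisson_tail (mZ _) (lam_gt0 _ (ltn0Sn j)) (ltn0Sn _)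
    (fun n => Zpoisson _ n (ltn0Sn j))) _.
  have /andP[_ x_lt] := truncn_itv (x_ge0 j).
  rewrite lee_fin ler_pdivrMr ?ltr0n // mulrC ler_pdivlMr ?mulr_gt0 ?ltr0n //.
  exact: ltW.
have summable : (\sum_(j <oo) P (bad j) < +oo)%E.
  apply: le_lt_trans (nneseries_inv_mulSS_lty R).
  by apply: lee_nneseries => [j _ _|j _]; [exact: measure_ge0 | exact: bad_le].
apply: (filterS _ (ae_eventually_not bad_meas summable)) => t [N good].
exists N.+1 => -[//|l] Nl; have /contrapT := good l Nl.
rewrite -(bigcup_mkord _ (fun n => Z l.+1 @^-1` [set n%:R])) => -[n /= n_lt ->].
have /andP[trunc_le _] := truncn_itv (x_ge0 l).
by rewrite normr_nat (le_trans _ trunc_le) // ler_nat -ltnS.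
Qed.

Theorem mainTheorem6 (R : realType) (theta : nat -> R) (r : R)
  (Htheta_pos : forall k, (0 < k)%N -> 0 < theta k)
  (Hr_pos : 0 < r)
  (Hradius : radius_of_convergence
               (fun k => if k == 0%N then 0 else theta k / k%:R) = r%:E)
  (d : measure_display) (T : measurableType d) (P : probability T R)
  (Y : nat -> T -> R)
  (HYmeas : forall l, measurable_fun setT (Y l))
  (HYpoisson : forall l n, (0 < l)%N ->
     P (Y l @^-1` [set n%:R]) = (poisson_pmf (r ^+ l * theta l / l%:R) n)%:E)
  (HYindep : mutually_independent P (fun l : nat => Y l.+1)) :
  let X := fun (k : nat) (t : T) =>
    \sum_(l < k.+1 | (0 < l)%N && (l %| k)%N) l%:R * Y l t in
  {ae P, forall t,
     (1%:E <= radius_of_convergence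
               (fun k => if k == 0%N then 0%R else (X k t / k%:R)%R))%E}.
Proof.
move=> X.
pose lam l := r ^+ l * theta l / l%:R.
have lam_gt0 l : (0 < l)%N -> 0 < lam l.
  by move=> l0; rewrite divr_gt0 ?ltr0n // mulr_gt0 ?exprn_gt0 ?Htheta_pos.
have lam_subexp : subexponential lam.
  have r_le : (r%:E <= radius_of_convergence
      (fun k => if k == 0%N then 0 else theta k / k%:R)%R)%E by rewrite Hradius.
  apply: (subexponential_eventually_le (N := 1) _
    (subexponential_radius Hr_pos r_le)) => l l0.
  by rewrite (negbTE (lt0n_neq0 l0)) /lam [_ * r ^+ _]mulrC mulrA.
have weight_subexp :
    subexponential (fun l => l%:R * (lam l * (l%:R * l.+1%:R))).
  apply: subexponentialM; first exact: subexponential_natr.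
  apply: subexponentialM; first exact: lam_subexp.
  apply: subexponentialM; first exact: subexponential_natr.
  exact: subexponential_natrS.
apply: (filterS _ (ae_poisson_eventually_le HYmeas lam_gt0 HYpoisson)).
move=> t [N Y_le].
apply: radius_of_convergence_ge1; rewrite /X.
apply: (@subexponential_divisor_sum _ (Y ^~ t)).
apply: (subexponential_eventually_le (N := N) _ weight_subexp) => l Nl.
rewrite [leLHS]normrM [leRHS]normrM; apply: ler_wpM2l => //.
exact: le_trans (Y_le l Nl) (ler_norm _).
Qed.
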